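(* Let $X$ be a compact metric space and $f\colon X\to X$ a transitive $n$-expansive homeomorphism with the shadowing property. Then $f$ has the two-sided limit shadowing property with a gap.
   Context: For $x\in X$, $c>0$: $W^s_c(x)=\{y: d(f^k(y),f^k(x))\leq c\ \forall k\geq0\}$, $W^u_c(x)=\{y: d(f^k(y),f^k(x))\leq c\ \forall k\leq0\}$. $f$ is $n$-expansive if there is $c>0$ such that $W^s_c(x)\cap W^u_c(x)$ has at most $n$ points for every $x$. $f$ is transitive if for every nonempty open $U,V$ there is $k\in\mathbb{N}$ with $f^k(U)\cap V\neq\emptyset$. $f$ has the shadowing property if for every $\varepsilon>0$ there is $\delta>0$ such that for every $(x_k)_{k\in\mathbb{Z}}$ with $d(f(x_k),x_{k+1})<\delta$ for all $k$ there is $y$ with $d(f^k(y),x_k)<\varepsilon$ for all $k$. A two-sided limit pseudo orbit is $(x_k)_{k\in\mathbb{Z}}$ with $d(f(x_k),x_{k+1})\to0$ as $|k|\to\infty$. It is two-sided limit shadowed with gap $K\in\mathbb{Z}$ if there is $y\in X$ with $d(f^k(y),x_k)\to0$ as $k\to-\infty$ and $d(f^{K+k}(y),x_k)\to0$ as $k\to\infty$. $f$ has the two-sided limit shadowing property with a gap if there exists $N\in\mathbb{N}$ such that every two-sided limit pseudo orbit is two-sided limit shadowed with some gap $K$ satisfying $|K|\leq N$. *)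

From Stdlib Require Import Reals Lra List.
Open Scope R_scope.

Record metric_space := MetricSpace {
  mcarrier :> Type;
  dist : mcarrier -> mcarrier -> R;
  dist_nonneg : forall x y, 0 <= dist x y;
  dist_eq0 : forall x y, dist x y = 0 <-> x = y;
  dist_sym : forall x y, dist x y = dist y x;
  dist_tri : forall x y z, dist x z <= dist x y + dist y z
}.

Section Metric.
Variable X : metric_space.

Definition ball (x : X) (r : R) : X -> Prop := fun y => dist X x y < r.

Definition is_open (U : X -> Prop) : Prop :=
  forall x, U x -> exists r, 0 < r /\ forall y, ball x r y -> U y.

Definition compact_space : Prop :=
  forall (I : Type) (U : I -> X -> Prop),
    (forall i, is_open (U i)) ->
    (forall x, exists i, U i x) ->
    exists l : list I, forall x, exists i, In i l /\ U i x.

Definition continuous_map (f : X -> X) : Prop :=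
  forall x eps, 0 < eps -> exists del, 0 < del /\
    forall y, dist X x y < del -> dist X (f x) (f y) < eps.

Definition homeomorphism (f : X -> X) : Prop :=
  continuous_map f /\
  exists g : X -> X, continuous_map g /\
    (forall x, g (f x) = x) /\ (forall x, f (g x) = x).

Definition ziter (f g : X -> X) (k : Z) (x : X) : X :=
  match k with
  | Z0 => x
  | Zpos p => Nat.iter (Pos.to_nat p) f x
  | Zneg p => Nat.iter (Pos.to_nat p) g x
  end.

Definition Ws (f g : X -> X) (c : R) (x : X) : X -> Prop :=
  fun y => forall k : Z, (0 <= k)%Z -> dist X (ziter f g k y) (ziter f g k x) <= c.
Definition Wu (f g : X -> X) (c : R) (x : X) : X -> Prop :=
  fun y => forall k : Z, (k <= 0)%Z -> dist X (ziter f g k y) (ziter f g k x) <= c.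

Definition at_most (n : nat) (A : X -> Prop) : Prop :=
  exists l : list X, (length l <= n)%nat /\ forall y, A y -> In y l.

Definition n_expansive (n : nat) (f g : X -> X) : Prop :=
  exists c, 0 < c /\ forall x, at_most n (fun y => Ws f g c x y /\ Wu f g c x y).

Definition transitive (f : X -> X) : Prop :=
  forall U V : X -> Prop, is_open U -> is_open V ->
    (exists u, U u) -> (exists v, V v) ->
    exists k : nat, exists u, U u /\ V (Nat.iter k f u).

Definition shadowing (f g : X -> X) : Prop :=
  forall eps, 0 < eps -> exists del, 0 < del /\
    forall xs : Z -> X, (forall k, dist X (f (xs k)) (xs (k + 1)%Z) < del) ->
      exists y, forall k, dist X (ziter f g k y) (xs k) < eps.

Definition tends0_pos (u : Z -> R) : Prop :=
  forall eps, 0 < eps -> exists K : Z, forall k, (K <= k)%Z -> Rabs (u k) < eps.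
Definition tends0_neg (u : Z -> R) : Prop :=
  forall eps, 0 < eps -> exists K : Z, forall k, (k <= K)%Z -> Rabs (u k) < eps.

Definition two_sided_limit_pseudo_orbit (f : X -> X) (xs : Z -> X) : Prop :=
  tends0_pos (fun k => dist X (f (xs k)) (xs (k + 1)%Z)) /\
  tends0_neg (fun k => dist X (f (xs k)) (xs (k + 1)%Z)).

Definition two_sided_limit_shadowed_gap (f g : X -> X) (xs : Z -> X) (K : Z) : Prop :=
  exists y,
    tends0_neg (fun k => dist X (ziter f g k y) (xs k)) /\
    tends0_pos (fun k => dist X (ziter f g (K + k) y) (xs k)).

Definition two_sided_limit_shadowing_gap (f g : X -> X) : Prop :=
  exists N : nat, forall xs : Z -> X, two_sided_limit_pseudo_orbit f xs ->
    exists K : Z, (Z.abs K <= Z.of_nat N)%Z /\ two_sided_limit_shadowed_gap f g xs K.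

End Metric.

From Stdlib Require Import Reals Lra Lia List ZArith Classical ClassicalEpsilon.
Open Scope R_scope.

(* For every [eps], transitivity and shadowing yield a true orbit that [eps]-shadows
   a given two-sided limit pseudo-orbit outside a bounded window, with a gap in
   [1, p]: join the pseudo-orbit to a periodic orbit of period [p] by chains of
   uniformly bounded length (compactness), wind around it, and shadow.
   By [n]-expansivity, points whose orbits stay [c / 2]-close in one time direction
   form at most [n] asymptotic classes: [n + 1] pairwise non-asymptotic such points
   are either recurrently close and far apart, and then hybrid pseudo-orbits
   switching between them have [n + 1] distinct shadows in one dynamical [c]-ball,
   or eventually separated, and then limit points of their iterates are [n + 1]
   distinct points of one dynamical [c]-ball.
   Taking approximate shadows with errors tending to [0] and a recurring gap, a
   point lying in a recurring forward class, and inside it in a recurring backward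
   class, is a two-sided limit shadow. *)

Lemma inv_succ_vanishes (gam : R) :
  0 < gam -> exists N, forall j, (N <= j)%nat -> / INR (S j) < gam.
Proof.
  intro Hgam. destruct (archimed_cor1 gam Hgam) as [N [HN HN0]].
  exists N. intros j Hj.
  assert (HNpos : 0 < INR N) by (apply lt_0_INR; exact HN0).
  assert (INR N <= INR (S j)) by (apply le_INR; lia).
  apply Rle_lt_trans with (/ INR N); [apply Rinv_le_contravar|]; assumption.
Qed.

Lemma vanishing_sequence (e : R) :
  0 < e -> exists eps : nat -> R, (forall j, 0 < eps j <= e) /\
    (forall gam, 0 < gam -> exists N, forall j, (N <= j)%nat -> eps j < gam).
Proof.
  intro He. exists (fun j => e * / INR (S j)). split.
  - intro j. assert (1 <= INR (S j)) by (apply (le_INR 1); lia).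
    assert (0 < / INR (S j) <= 1) as [].
    { split; [apply Rinv_0_lt_compat; lra|]. rewrite <- Rinv_1. apply Rinv_le_contravar; lra. }
    split; nra.
  - intros gam Hgam. destruct (inv_succ_vanishes (gam / e)) as [N HN].
    { apply Rdiv_lt_0_compat; assumption. }
    exists N. intros j Hj. specialize (HN j Hj).
    apply (Rmult_lt_compat_l e) in HN; [|exact He].
    replace (e * (gam / e)) with gam in HN by (field; lra). exact HN.
Qed.

Lemma strict_incr_lt (phi : nat -> nat) :
  (forall t, (phi t < phi (S t))%nat) -> forall t t', (t < t')%nat -> (phi t < phi t')%nat.
Proof.
  intros Hphi t t' Htt'. induction Htt' as [|t' _ IH]; [apply Hphi|].
  specialize (Hphi t'). lia.
Qed.

Lemma strict_incr_ge_id (phi : nat -> nat) :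
  (forall t, (phi t < phi (S t))%nat) -> forall t, (t <= phi t)%nat.
Proof.
  intros Hphi t. induction t as [|t IH]; [lia|]. specialize (Hphi t). lia.
Qed.

Lemma bounded_recurrent_value (h : nat -> nat) (N : nat) :
  (forall j, (h j <= N)%nat) -> exists v, forall B, exists j, (B <= j)%nat /\ h j = v.
Proof.
  revert h. induction N as [|N IH]; intros h Hh.
  - exists 0%nat. intro B. exists B. specialize (Hh B). split; lia.
  - destruct (classic (forall B, exists j, (B <= j)%nat /\ h j = S N)) as [Hrec|Hfin].
    + exists (S N). exact Hrec.
    + apply not_all_ex_not in Hfin as [B HB].
      destruct (IH (fun j => h (B + j)%nat)) as [v Hv].
      { intro j. specialize (Hh (B + j)%nat).
        assert (h (B + j)%nat <> S N) by (intro E; apply HB; exists (B + j)%nat; split; [lia|exact E]).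
        lia. }
      exists v. intro B'. destruct (Hv B') as [j [Hj E]].
      exists (B + j)%nat. split; [lia|exact E].
Qed.

Lemma recurrent_class (rel : nat -> nat -> Prop) (J : nat -> Prop) (n : nat) :
  (forall i j, rel i j -> rel j i) ->
  (forall B, exists j, (B <= j)%nat /\ J j) ->
  ~ (exists w : nat -> nat, (forall m, (m <= n)%nat -> J (w m)) /\
       forall m l, (m <= n)%nat -> (l <= n)%nat -> m <> l -> ~ rel (w m) (w l)) ->
  exists i, J i /\ forall B, exists j, (B <= j)%nat /\ J j /\ rel i j.
Proof.
  intros rel_sym HJ Hno. apply NNPP. intro Hfin.
  assert (Hbound : forall i, exists B, J i -> forall j, (B <= j)%nat -> J j -> ~ rel i j).
  { intro i. apply NNPP. intro Hi. apply Hfin. exists i. split.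
    - apply NNPP. intro HJi. apply Hi. exists 0%nat. intro HJi'. contradiction.
    - intro B. apply NNPP. intro HB. apply Hi. exists B. intros _ j Hj HJj HR.
      apply HB. exists j. auto. }
  destruct (choice _ Hbound) as [bnd Hbnd].
  apply Hno. enough (Hgrow : forall m, exists (w : nat -> nat) (B : nat),
    (forall i, (i <= m)%nat -> J (w i) /\ (bnd (w i) <= B)%nat /\ (w i < B)%nat) /\
    forall i l, (i <= m)%nat -> (l <= m)%nat -> i <> l -> ~ rel (w i) (w l)).
  { destruct (Hgrow n) as [w [B [Hw Hpair]]]. exists w. split; [apply Hw | exact Hpair]. }
  induction m as [|m [w [B [Hw Hpair]]]].
  - destruct (HJ 0%nat) as [j [_ HJj]].
    exists (fun _ => j), (S (j + bnd j)). split; [intros i _; repeat split; auto; lia|].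
    intros i l Hi Hl Hil. lia.
  - destruct (HJ B) as [j [HBj HJj]].
    assert (Hnew : forall i, (i <= m)%nat -> ~ rel (w i) j).
    { intros i Hi. destruct (Hw i Hi) as [HJwi [Hb _]]. apply Hbnd; auto. lia. }
    exists (fun i => if Nat.eqb i (S m) then j else w i), (S (j + bnd j + B)). split.
    + intros i Hi. destruct (Nat.eqb_spec i (S m)); [repeat split; auto; lia|].
      destruct (Hw i ltac:(lia)) as [? [? ?]]. repeat split; auto; lia.
    + intros i l Hi Hl Hil.
      destruct (Nat.eqb_spec i (S m)), (Nat.eqb_spec l (S m)); try lia.
      * intro HR. apply (Hnew l); [lia|]. apply rel_sym. exact HR.
      * apply Hnew. lia.
      * apply Hpair; lia.
Qed.

Lemma Z_mod_succ (k L : Z) :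
  (0 < L)%Z -> ((k + 1) mod L = if (k mod L + 1 <? L) then k mod L + 1 else 0)%Z.
Proof.
  intro HL. rewrite <- Z.add_mod_idemp_l by lia.
  pose proof (Z.mod_pos_bound k L HL).
  destruct (Z.ltb_spec (k mod L + 1) L).
  - apply Z.mod_small. lia.
  - replace (k mod L + 1)%Z with L by lia. apply Z.mod_same. lia.
Qed.

(** * Time directions *)

(* The direction [s = 1] means [k -> +oo], and [s = -1] means [k -> -oo]. *)
Definition eventually (s : Z) (P : Z -> Prop) : Prop :=
  exists B, forall k, (B <= s * k)%Z -> P k.

Definition frequently (s : Z) (P : Z -> Prop) : Prop :=
  forall B, exists k, (B <= s * k)%Z /\ P k.

Lemma eventually_mono (s : Z) (P Q : Z -> Prop) :
  (forall k, P k -> Q k) -> eventually s P -> eventually s Q.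
Proof. intros HPQ [B HB]. exists B. auto. Qed.

Lemma eventually_and (s : Z) (P Q : Z -> Prop) :
  eventually s P -> eventually s Q -> eventually s (fun k => P k /\ Q k).
Proof.
  intros [B1 H1] [B2 H2]. exists (Z.max B1 B2). intros k Hk. split; [apply H1 | apply H2]; lia.
Qed.

Lemma eventually_shift (s K : Z) (P : Z -> Prop) :
  eventually s P -> eventually s (fun k => P (K + k)%Z).
Proof. intros [B HB]. exists (B - s * K)%Z. intros k Hk. apply HB. lia. Qed.

Lemma frequently_mono (s : Z) (P Q : Z -> Prop) :
  (forall k, P k -> Q k) -> frequently s P -> frequently s Q.
Proof. intros HPQ HP B. destruct (HP B) as [k [Hk HPk]]. eauto. Qed.

Lemma not_eventually (s : Z) (P : Z -> Prop) :
  ~ eventually s P -> frequently s (fun k => ~ P k).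
Proof.
  intros HnP B. apply NNPP. intro Hn. apply HnP. exists B. intros k Hk.
  apply NNPP. intro HPk. apply Hn. eauto.
Qed.

Lemma interleaved_times (s : Z) (P Q : Z -> Prop) (B0 : Z) :
  frequently s P -> frequently s Q ->
  exists t b : nat -> Z,
    (forall m, P (t m) /\ Q (b m) /\ (B0 <= s * t m < s * b m)%Z) /\
    (forall m l, (m < l)%nat -> (s * b m < s * t l)%Z).
Proof.
  intros HP HQ.
  destruct (choice _ HP) as [tp Htp]. destruct (choice _ HQ) as [tq Htq].
  pose (t := fix t (m : nat) : Z :=
    match m with O => tp B0 | S m' => tp (s * tq (s * t m' + 1) + 1)%Z end).
  pose (b := fun m => tq (s * t m + 1)%Z).
  assert (Hstep : forall m, (s * t m < s * b m < s * t (S m))%Z).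
  { intro m. pose proof (proj1 (Htq (s * t m + 1)%Z)).
    pose proof (proj1 (Htp (s * b m + 1)%Z)). unfold b in *. simpl. lia. }
  assert (Hmono : forall m l, (m <= l)%nat -> (s * t m <= s * t l)%Z).
  { intros m l Hml. induction Hml as [|l _ IH]; [lia|]. pose proof (Hstep l). lia. }
  exists t, b. split.
  - intro m. split; [destruct m; apply Htp|]. split; [apply Htq|].
    pose proof (Hmono 0%nat m ltac:(lia)). pose proof (proj1 (Htp B0)).
    pose proof (Hstep m). simpl in *. lia.
  - intros m l Hml. pose proof (Hstep m). pose proof (Hmono (S m) l Hml). lia.
Qed.

Lemma tends0_pos_of_eventually (u : Z -> R) :
  (forall k, 0 <= u k) -> (forall gam, 0 < gam -> eventually 1 (fun k => u k < gam)) ->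
  tends0_pos u.
Proof.
  intros Hu H gam Hgam. destruct (H gam Hgam) as [B HB]. exists B. intros k Hk.
  rewrite Rabs_pos_eq by apply Hu. apply HB. lia.
Qed.

Lemma tends0_neg_of_eventually (u : Z -> R) :
  (forall k, 0 <= u k) -> (forall gam, 0 < gam -> eventually (-1) (fun k => u k < gam)) ->
  tends0_neg u.
Proof.
  intros Hu H gam Hgam. destruct (H gam Hgam) as [B HB]. exists (- B)%Z. intros k Hk.
  rewrite Rabs_pos_eq by apply Hu. apply HB. lia.
Qed.

(** * Sequential compactness *)

Section Metric.
Variable X : metric_space.
Notation d := (dist X).

Lemma dist_diag (x : X) : d x x = 0.
Proof. apply dist_eq0. reflexivity. Qed.

Lemma ball_open (x : X) (r : R) : is_open X (ball X x r).
Proof.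
  intros y Hy. unfold ball in *. exists (r - d x y). split; [lra|].
  intros z Hz. pose proof (dist_tri X x y z). lra.
Qed.

Definition converges (u : nat -> X) (a : X) : Prop :=
  forall r, 0 < r -> exists N, forall t, (N <= t)%nat -> d (u t) a < r.

Lemma converges_subseq (u : nat -> X) (a : X) (phi : nat -> nat) :
  converges u a -> (forall t, (phi t < phi (S t))%nat) -> converges (fun t => u (phi t)) a.
Proof.
  intros Hu Hphi r Hr. destruct (Hu r Hr) as [N HN]. exists N. intros t Ht.
  apply HN. pose proof (strict_incr_ge_id phi Hphi t). lia.
Qed.

Lemma dist_le_of_converges (p q : nat -> X) (P Q : X) (e : R) :
  converges p P -> converges q Q ->
  (exists N, forall t, (N <= t)%nat -> d (p t) (q t) <= e) -> d P Q <= e.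
Proof.
  intros Hp Hq [N HN]. apply Rnot_lt_le. intro Hlt.
  set (eta := (d P Q - e) / 2).
  destruct (Hp eta ltac:(unfold eta; lra)) as [N1 H1].
  destruct (Hq eta ltac:(unfold eta; lra)) as [N2 H2].
  set (t := (N + N1 + N2)%nat).
  specialize (HN t ltac:(unfold t; lia)). specialize (H1 t ltac:(unfold t; lia)).
  specialize (H2 t ltac:(unfold t; lia)).
  pose proof (dist_tri X P (p t) Q). pose proof (dist_tri X (p t) (q t) Q).
  rewrite (dist_sym X P (p t)) in *. unfold eta in *. lra.
Qed.

Lemma dist_ge_of_converges (p q : nat -> X) (P Q : X) (lam : R) :
  converges p P -> converges q Q ->
  (exists N, forall t, (N <= t)%nat -> lam <= d (p t) (q t)) -> lam <= d P Q.
Proof.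
  intros Hp Hq [N HN]. apply Rnot_lt_le. intro Hlt.
  set (eta := (lam - d P Q) / 2).
  destruct (Hp eta ltac:(unfold eta; lra)) as [N1 H1].
  destruct (Hq eta ltac:(unfold eta; lra)) as [N2 H2].
  set (t := (N + N1 + N2)%nat).
  specialize (HN t ltac:(unfold t; lia)). specialize (H1 t ltac:(unfold t; lia)).
  specialize (H2 t ltac:(unfold t; lia)).
  pose proof (dist_tri X (p t) P (q t)). pose proof (dist_tri X P Q (q t)).
  rewrite (dist_sym X Q (q t)) in *. unfold eta in *. lra.
Qed.

Lemma converges_continuous (h : X -> X) (u : nat -> X) (a : X) :
  continuous_map X h -> converges u a -> converges (fun t => h (u t)) (h a).
Proof.
  intros Hh Hu r Hr. destruct (Hh a r Hr) as [del [Hdel Hd]].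
  destruct (Hu del Hdel) as [N HN]. exists N. intros t Ht.
  rewrite dist_sym. apply Hd. rewrite dist_sym. auto.
Qed.

Section Compact.
Hypothesis Hcpt : compact_space X.

Lemma compact_nat_cover_bounded (U : nat -> X -> Prop) :
  (forall l, is_open X (U l)) -> (forall x, exists l, U l x) ->
  exists T, forall x, exists l, (l <= T)%nat /\ U l x.
Proof.
  intros Hopen Hcover. destruct (Hcpt nat U Hopen Hcover) as [ls Hls].
  exists (list_max ls). intro x. destruct (Hls x) as [l [Hin Hx]].
  exists l. split; [|exact Hx].
  assert (Hmax : Forall (fun k => (k <= list_max ls)%nat) ls) by (apply list_max_le; lia).
  rewrite Forall_forall in Hmax. auto.
Qed.

Lemma cluster_point (u : nat -> X) :
  exists a, forall r, 0 < r -> forall B, exists j, (B <= j)%nat /\ d a (u j) < r.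
Proof.
  apply NNPP. intro Hn.
  (* [U B] holds the points having a ball around them that [u] leaves for good after [B] *)
  pose (U := fun B x => exists a r, d a x < r /\ forall j, (B <= j)%nat -> r <= d a (u j)).
  destruct (compact_nat_cover_bounded U) as [T HT].
  - intros B x [a [r [Hx Hr]]]. exists (r - d a x). split; [lra|].
    intros y Hy. exists a, r. split; [|exact Hr]. unfold ball in Hy.
    pose proof (dist_tri X a x y). lra.
  - intro x. apply NNPP. intro Hx. apply Hn. exists x. intros r Hr B.
    apply NNPP. intro HB. apply Hx. exists B, x, r. split; [rewrite dist_diag; exact Hr|].
    intros j Hj. apply Rnot_lt_le. intro Hlt. apply HB. eauto.
  - destruct (HT (u T)) as [B [HB [a [r [Hin Hout]]]]].
    specialize (Hout T HB). lra.
Qed.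

Lemma convergent_subsequence (u : nat -> X) :
  exists phi : nat -> nat, (forall t, (phi t < phi (S t))%nat) /\
    exists a, converges (fun t => u (phi t)) a.
Proof.
  destruct (cluster_point u) as [a Ha].
  assert (Hnear : forall B k : nat, exists j, (B <= j)%nat /\ d a (u j) < / INR (S k)).
  { intros B k. apply Ha. apply Rinv_0_lt_compat, lt_0_INR. lia. }
  destruct (choice (fun Bk j => (fst Bk <= j)%nat /\ d a (u j) < / INR (S (snd Bk))))
    as [next Hnext]; [intros [B k]; apply Hnear|].
  pose (phi := fix phi (t : nat) : nat :=
    match t with O => next (0, 0)%nat | S t' => next (S (phi t'), S t') end).
  assert (Hphi : forall t, d a (u (phi t)) < / INR (S t)) by (intros [|t]; apply Hnext).
  exists phi. split.
  - intro t. apply (Hnext (S (phi t), S t)).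
  - exists a. intros r Hr. destruct (inv_succ_vanishes r Hr) as [N HN].
    exists N. intros t Ht. rewrite dist_sym. specialize (Hphi t). specialize (HN t Ht). lra.
Qed.

Lemma convergent_subsequence_family (u : nat -> nat -> X) (m : nat) :
  exists phi : nat -> nat, (forall t, (phi t < phi (S t))%nat) /\
    exists a : nat -> X, forall i, (i < m)%nat -> converges (fun t => u i (phi t)) (a i).
Proof.
  induction m as [|m [phi [Hphi [a Ha]]]].
  - exists (fun t => t). split; [intro; lia|]. exists (fun _ => u 0%nat 0%nat). intros; lia.
  - destruct (convergent_subsequence (fun t => u m (phi t))) as [psi [Hpsi [b Hb]]].
    exists (fun t => phi (psi t)). split.
    + intro t. apply strict_incr_lt; auto.
    + exists (fun i => if Nat.eqb i m then b else a i). intros i Hi.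
      destruct (Nat.eqb_spec i m) as [->|Him]; [exact Hb|].
      apply (converges_subseq (fun t => u i (phi t))); auto. apply Ha. lia.
Qed.

End Compact.
End Metric.

(** * Asymptotic classes of an n-expansive homeomorphism with shadowing *)

Section Dynamics.
Variable X : metric_space.
Variables f g : X -> X.
Hypothesis gf : forall x, g (f x) = x.
Hypothesis fg : forall x, f (g x) = x.

Notation d := (dist X).
Notation zi := (ziter X f g).

Lemma ziter_of_nat (m : nat) (x : X) : zi (Z.of_nat m) x = Nat.iter m f x.
Proof. destruct m; simpl; [reflexivity|]. rewrite SuccNat2Pos.id_succ. reflexivity. Qed.

Lemma ziter_opp_of_nat (m : nat) (x : X) : zi (- Z.of_nat m) x = Nat.iter m g x.
Proof. destruct m; simpl; [reflexivity|]. rewrite SuccNat2Pos.id_succ. reflexivity. Qed.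

Lemma ziter_succ (k : Z) (x : X) : zi (k + 1) x = f (zi k x).
Proof.
  destruct (Z_le_gt_dec 0 k) as [Hk|Hk].
  - rewrite <- (Z2Nat.id k Hk).
    replace (Z.of_nat (Z.to_nat k) + 1)%Z with (Z.of_nat (S (Z.to_nat k))) by lia.
    rewrite !ziter_of_nat. reflexivity.
  - replace k with (- Z.of_nat (S (Z.to_nat (- k - 1))))%Z by lia.
    replace (- Z.of_nat (S (Z.to_nat (- k - 1))) + 1)%Z with (- Z.of_nat (Z.to_nat (- k - 1)))%Z
      by lia.
    rewrite !ziter_opp_of_nat. simpl. rewrite fg. reflexivity.
Qed.

Lemma ziter_pred (k : Z) (x : X) : zi (k - 1) x = g (zi k x).
Proof. replace k with (k - 1 + 1)%Z at 2 by lia. rewrite ziter_succ, gf. reflexivity. Qed.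

Lemma ziter_add (a b : Z) (x : X) : zi (a + b) x = zi a (zi b x).
Proof.
  induction a as [|a IH|a IH] using Z.peano_ind.
  - reflexivity.
  - rewrite <- Z.add_1_r. replace (a + 1 + b)%Z with (a + b + 1)%Z by lia.
    rewrite !ziter_succ, IH. reflexivity.
  - rewrite <- Z.sub_1_r. replace (a - 1 + b)%Z with (a + b - 1)%Z by lia.
    rewrite !ziter_pred, IH. reflexivity.
Qed.

Lemma ziter_period (a b : Z) (x : X) :
  (a < b)%Z -> zi a x = zi b x -> Nat.iter (Z.to_nat (b - a)) f x = x.
Proof.
  intros Hab E. rewrite <- ziter_of_nat, Z2Nat.id by lia.
  replace (b - a)%Z with (- a + b)%Z by lia. rewrite ziter_add, <- E, <- ziter_add.
  replace (- a + a)%Z with 0%Z by lia. reflexivity.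
Qed.

Lemma continuous_comp (h1 h2 : X -> X) :
  continuous_map X h1 -> continuous_map X h2 -> continuous_map X (fun x => h1 (h2 x)).
Proof.
  intros H1 H2 x eps Heps. destruct (H1 (h2 x) eps Heps) as [e1 [He1 P1]].
  destruct (H2 x e1 He1) as [e2 [He2 P2]]. exists e2. auto.
Qed.

Hypothesis fcont : continuous_map X f.
Hypothesis gcont : continuous_map X g.

Lemma ziter_continuous (k : Z) : continuous_map X (zi k).
Proof.
  induction k as [|k IH|k IH] using Z.peano_ind.
  - intros x eps Heps. exists eps. auto.
  - intros x eps Heps. destruct (continuous_comp f (zi k) fcont IH x eps Heps) as [del [Hdel H]].
    exists del. split; [exact Hdel|]. intros y Hy. rewrite <- Z.add_1_r, !ziter_succ. auto.
  - intros x eps Heps. destruct (continuous_comp g (zi k) gcont IH x eps Heps) as [del [Hdel H]].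
    exists del. split; [exact Hdel|]. intros y Hy. rewrite <- Z.sub_1_r, !ziter_pred. auto.
Qed.

Definition pseudo_orbit (del : R) (xs : Z -> X) : Prop :=
  forall k, d (f (xs k)) (xs (k + 1)%Z) < del.

Definition asymptotic (s : Z) (a b : X) : Prop :=
  forall gam, 0 < gam -> eventually s (fun k => d (zi k a) (zi k b) < gam).

Lemma asymptotic_sym (s : Z) (a b : X) : asymptotic s a b -> asymptotic s b a.
Proof.
  intros H gam Hgam. eapply eventually_mono; [|exact (H gam Hgam)].
  intros k Hk. rewrite dist_sym. exact Hk.
Qed.

Lemma asymptotic_trans (s : Z) (a b e : X) :
  asymptotic s a b -> asymptotic s b e -> asymptotic s a e.
Proof.
  intros H1 H2 gam Hgam.
  eapply eventually_mono; [|exact (eventually_and s _ _ (H1 (gam / 2) ltac:(lra)) (H2 (gam / 2) ltac:(lra)))].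
  intros k [? ?]. pose proof (dist_tri X (zi k a) (zi k b) (zi k e)). lra.
Qed.

Lemma close_of_common_approx (s : Z) (a b : X) (ys : Z -> X) (e1 e2 : R) :
  eventually s (fun k => d (zi k a) (ys k) < e1) ->
  eventually s (fun k => d (zi k b) (ys k) < e2) ->
  eventually s (fun k => d (zi k a) (zi k b) <= e1 + e2).
Proof.
  intros Ha Hb. eapply eventually_mono; [|exact (eventually_and s _ _ Ha Hb)].
  intros k [? ?]. pose proof (dist_tri X (zi k a) (ys k) (zi k b)).
  rewrite (dist_sym X (ys k)) in *. lra.
Qed.

Lemma vanishing_approx_of_asymptotic (s : Z) (y : X) (ys : Z -> X) (Y : nat -> X) (eps : nat -> R) :
  (forall gam, 0 < gam -> exists N, forall j, (N <= j)%nat -> eps j < gam) ->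
  (forall B, exists j, (B <= j)%nat /\ asymptotic s y (Y j) /\
     eventually s (fun k => d (zi k (Y j)) (ys k) < eps j)) ->
  forall gam, 0 < gam -> eventually s (fun k => d (zi k y) (ys k) < gam).
Proof.
  intros Heps HY gam Hgam.
  destruct (Heps (gam / 2) ltac:(lra)) as [N HN]. destruct (HY N) as [j [Hj [Hyj HYj]]].
  specialize (HN j Hj).
  eapply eventually_mono; [|exact (eventually_and s _ _ (Hyj (gam / 2) ltac:(lra)) HYj)].
  intros k [? ?]. pose proof (dist_tri X (zi k y) (zi k (Y j)) (ys k)). lra.
Qed.

Lemma tends0_pos_of_shifted_approx (y : X) (xs : Z -> X) (K : Z) :
  (forall gam, 0 < gam -> eventually 1 (fun k => d (zi k y) (xs (k - K)%Z) < gam)) ->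
  tends0_pos (fun k => d (zi (K + k) y) (xs k)).
Proof.
  intro H. apply tends0_pos_of_eventually; [intro; apply dist_nonneg|].
  intros gam Hgam. eapply eventually_mono; [|exact (eventually_shift 1 K _ (H gam Hgam))].
  intros k Hk. simpl in Hk. replace (K + k - K)%Z with k in Hk by lia. exact Hk.
Qed.

Definition hybrid (p q : X) (t : Z) (k : Z) : X := if (k <? t)%Z then zi k p else zi k q.

Lemma hybrid_pseudo_orbit (p q : X) (t : Z) (del : R) :
  0 < del -> d (zi t p) (zi t q) < del -> pseudo_orbit del (hybrid p q t).
Proof.
  intros Hdel Ht k. unfold hybrid.
  destruct (Z.ltb_spec k t), (Z.ltb_spec (k + 1) t); try lia;
    rewrite <- ziter_succ; try (rewrite dist_diag; exact Hdel).
  replace (k + 1)%Z with t by lia. exact Ht.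
Qed.

Variable n : nat.
Variable c : R.
Hypothesis Hc : 0 < c.
Hypothesis Hexp : forall x, at_most X n (fun y => Ws X f g c x y /\ Wu X f g c x y).

Lemma dynamical_ball_collision (r : X) (w : nat -> X) :
  (forall m, (m <= n)%nat -> forall k, d (zi k (w m)) (zi k r) <= c) ->
  exists m l, (m <= n)%nat /\ (l <= n)%nat /\ m <> l /\ w m = w l.
Proof.
  intro Hw. apply NNPP. intro Hinj.
  destruct (Hexp r) as [ys [Hlen Hys]].
  assert (Hnodup : NoDup (map w (seq 0 (S n)))).
  { apply NoDup_map_NoDup_ForallPairs; [|apply seq_NoDup].
    intros m l Hm Hl E. rewrite in_seq in Hm, Hl.
    apply NNPP. intro Hml. apply Hinj. exists m, l. repeat split; auto; lia. }
  assert (Hincl : incl (map w (seq 0 (S n))) ys).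
  { intros y Hy. apply in_map_iff in Hy as [m [<- Hm]]. rewrite in_seq in Hm.
    apply Hys. split; intros k _; apply Hw; lia. }
  pose proof (NoDup_incl_length Hnodup Hincl) as Hle.
  rewrite length_map, length_seq in Hle. lia.
Qed.

(* The shadows of [n + 1] pseudo-orbits staying [E]-close to the orbit of [r]
   lie in the dynamical [c]-ball of [r], so two of them coincide. *)
Lemma no_separated_shadowable_family (r : X) (H : nat -> Z -> X) (eta del E : R) :
  eta + E <= c ->
  (forall xs, pseudo_orbit del xs -> exists y, forall k, d (zi k y) (xs k) < eta) ->
  (forall m, (m <= n)%nat -> pseudo_orbit del (H m)) ->
  (forall m k, (m <= n)%nat -> d (H m k) (zi k r) <= E) ->
  (forall m l, (m <= n)%nat -> (l <= n)%nat -> m <> l ->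
     exists k, 2 * eta <= d (H m k) (H l k)) ->
  False.
Proof.
  intros HetaE Hshadow Hpseudo Hclose Hsep.
  destruct (choice (fun m y => (m <= n)%nat -> forall k, d (zi k y) (H m k) < eta)) as [w Hw].
  { intro m. destruct (le_lt_dec m n) as [Hm|Hm].
    - destruct (Hshadow (H m) (Hpseudo m Hm)) as [y Hy].
      exists y. intros _. exact Hy.
    - exists r. lia. }
  destruct (dynamical_ball_collision r w) as [m [l [Hm [Hl [Hml Hwml]]]]].
  - intros m Hm k. pose proof (Hw m Hm k). pose proof (Hclose m k Hm).
    pose proof (dist_tri X (zi k (w m)) (H m k) (zi k r)). lra.
  - destruct (Hsep m l Hm Hl Hml) as [k Hk].
    pose proof (Hw m Hm k) as Hmk. pose proof (Hw l Hl k). rewrite Hwml in Hmk.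
    pose proof (dist_tri X (H m k) (zi k (w l)) (H l k)).
    rewrite (dist_sym X (H m k) (zi k (w l))) in *. lra.
Qed.

Hypothesis Hsh : shadowing X f g.
Hypothesis Hcpt : compact_space X.

Section Direction.
Variable s : Z.
Hypothesis Hs : s = 1%Z \/ s = (-1)%Z.

(* Follows [u] before time [t] and [v] after it, "after" meaning in direction [s]. *)
Definition switch (u v : X) (t : Z) : Z -> X :=
  if (s =? 1)%Z then hybrid u v t else hybrid v u t.

Lemma switch_pseudo_orbit (u v : X) (t : Z) (del : R) :
  0 < del -> d (zi t u) (zi t v) < del -> pseudo_orbit del (switch u v t).
Proof.
  intros Hdel Ht. unfold switch. destruct Hs as [-> | ->]; simpl.
  - apply hybrid_pseudo_orbit; assumption.
  - apply hybrid_pseudo_orbit; [|rewrite dist_sym]; assumption.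
Qed.

Lemma switch_before (u v : X) (t k : Z) : (s * k < s * t)%Z -> switch u v t k = zi k u.
Proof.
  intro Hk. unfold switch, hybrid.
  destruct Hs as [-> | ->]; simpl; destruct (Z.ltb_spec k t); reflexivity || lia.
Qed.

Lemma switch_after (u v : X) (t k : Z) : (s * t < s * k)%Z -> switch u v t k = zi k v.
Proof.
  intro Hk. unfold switch, hybrid.
  destruct Hs as [-> | ->]; simpl; destruct (Z.ltb_spec k t); reflexivity || lia.
Qed.

Lemma switch_cases (u v : X) (t k : Z) :
  switch u v t k = zi k u \/ ((s * t <= s * k)%Z /\ switch u v t k = zi k v).
Proof.
  destruct (Z_lt_le_dec (s * k) (s * t)) as [Hk|Hk]; [left; apply switch_before; exact Hk|].
  unfold switch, hybrid. destruct Hs as [-> | ->]; simpl; destruct (Z.ltb_spec k t); auto.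
Qed.

(* Switching from [u] to [v] at the successive times where they are close, the
   orbits being [gam]-apart at intermediate times, yields [n + 1] separated
   pseudo-orbits near the orbit of [u]. *)
Lemma no_recurrent_switching (u v : X) (gam : R) :
  0 < gam ->
  eventually s (fun k => d (zi k u) (zi k v) <= c / 2) ->
  (forall del, 0 < del -> frequently s (fun k => d (zi k u) (zi k v) < del)) ->
  frequently s (fun k => gam <= d (zi k u) (zi k v)) -> False.
Proof.
  intros Hgam [B0 Hclose] Hsmall Hbig.
  destruct (Hsh (gam / 4)) as [del [Hdel Hshadow]]; [lra|].
  destruct (interleaved_times s _ _ B0 (Hsmall del Hdel) Hbig) as [t [b [Htb Hbt]]].
  assert (Hgc : gam <= c / 2).
  { destruct (Htb 0%nat) as [_ [Hb0 Hs0]]. pose proof (Hclose (b 0%nat) ltac:(lia)). lra. }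
  apply (no_separated_shadowable_family u (fun m => switch u v (t m)) (gam / 4) del (c / 2));
    [lra | exact Hshadow | | |].
  - intros m _. apply switch_pseudo_orbit; [exact Hdel | apply Htb].
  - intros m k _. destruct (switch_cases u v (t m) k) as [-> | [Hk ->]].
    + rewrite dist_diag. lra.
    + rewrite dist_sym. apply Hclose. pose proof (Htb m). lia.
  - assert (Hsep : forall m l, (m < l)%nat ->
      2 * (gam / 4) <= d (switch u v (t m) (b m)) (switch u v (t l) (b m))).
    { intros m l Hml. destruct (Htb m) as [_ [Hbm Htm]].
      rewrite switch_after, switch_before by (pose proof (Hbt m l Hml); lia).
      rewrite dist_sym. lra. }
    intros m l _ _ Hml. destruct (proj1 (Nat.lt_gt_cases m l) Hml) as [Hlt|Hlt].
    + exists (b m). auto.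
    + exists (b l). rewrite dist_sym. auto.
Qed.

Lemma separated_of_close_not_asymptotic (u v : X) :
  eventually s (fun k => d (zi k u) (zi k v) <= c / 2) -> ~ asymptotic s u v ->
  exists lam, 0 < lam /\ eventually s (fun k => lam <= d (zi k u) (zi k v)).
Proof.
  intros Hclose Hna. apply NNPP. intro Hns.
  assert (Hfar : exists gam, 0 < gam /\ ~ eventually s (fun k => d (zi k u) (zi k v) < gam)).
  { apply NNPP. intro H. apply Hna. intros gam Hgam.
    apply NNPP. intro Hev. apply H. eauto. }
  destruct Hfar as [gam [Hgam Hfar]].
  apply (no_recurrent_switching u v gam Hgam Hclose).
  - intros del Hdel. eapply frequently_mono; [|apply not_eventually].
    + intros k Hk. apply Rnot_le_lt. exact Hk.
    + intro Hev. apply Hns. eauto.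
  - eapply frequently_mono; [|exact (not_eventually s _ Hfar)].
    intros k Hk. apply Rnot_lt_le. exact Hk.
Qed.

(* Limit points of the [s]-iterates of such a family give [n + 1] distinct points
   of one dynamical [c]-ball. *)
Lemma no_close_separated_family (z : nat -> X) :
  (forall i j, (i <= n)%nat -> (j <= n)%nat ->
     eventually s (fun k => d (zi k (z i)) (zi k (z j)) <= c)) ->
  (forall i j, (i <= n)%nat -> (j <= n)%nat -> i <> j ->
     exists lam, 0 < lam /\ eventually s (fun k => lam <= d (zi k (z i)) (zi k (z j)))) ->
  False.
Proof.
  intros Hclose Hsep.
  assert (Hss : forall k, (s * (s * k) = k)%Z) by (intro k; destruct Hs as [-> | ->]; lia).
  destruct (convergent_subsequence_family X Hcpt (fun i t => zi (s * Z.of_nat t) (z i)) (S n))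
    as [phi [Hphi [a Ha]]].
  destruct (dynamical_ball_collision (a 0%nat) a) as [i [j [Hi [Hj [Hij Haij]]]]].
  - intros m Hm k. destruct (Hclose m 0%nat Hm ltac:(lia)) as [B HB].
    apply (dist_le_of_converges X (fun t => zi k (zi (s * Z.of_nat (phi t)) (z m)))
                                  (fun t => zi k (zi (s * Z.of_nat (phi t)) (z 0%nat))));
      [apply converges_continuous, Ha; [apply ziter_continuous | lia] ..|].
    exists (Z.to_nat (B - s * k)). intros t Ht. rewrite <- !ziter_add. apply HB.
    pose proof (strict_incr_ge_id phi Hphi t). rewrite Z.mul_add_distr_l, Hss. lia.
  - destruct (Hsep i j Hi Hj Hij) as [lam [Hlam [B HB]]].
    assert (Hge : lam <= d (a i) (a j)).
    { apply (dist_ge_of_converges X (fun t => zi (s * Z.of_nat (phi t)) (z i))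
                                    (fun t => zi (s * Z.of_nat (phi t)) (z j)));
        [apply Ha; lia .. |].
      exists (Z.to_nat B). intros t Ht. apply HB.
      pose proof (strict_incr_ge_id phi Hphi t). rewrite Hss. lia. }
    rewrite Haij, dist_diag in Hge. lra.
Qed.

Lemma asymptotic_class_recurrent (Y : nat -> X) (J : nat -> Prop) :
  (forall B, exists j, (B <= j)%nat /\ J j) ->
  (forall i j, J i -> J j -> eventually s (fun k => d (zi k (Y i)) (zi k (Y j)) <= c / 2)) ->
  exists i, J i /\ forall B, exists j, (B <= j)%nat /\ J j /\ asymptotic s (Y i) (Y j).
Proof.
  intros HJ Hclose.
  apply (recurrent_class (fun i j => asymptotic s (Y i) (Y j)) J n);
    [intros i j; apply asymptotic_sym | exact HJ |].
  intros [w [HwJ Hw]]. apply (no_close_separated_family (fun m => Y (w m))).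
  - intros i j Hi Hj. eapply eventually_mono; [|exact (Hclose _ _ (HwJ i Hi) (HwJ j Hj))].
    intros k Hk. simpl in Hk. lra.
  - intros i j Hi Hj Hij. apply separated_of_close_not_asymptotic; auto.
Qed.

End Direction.

(* Approximate shadows with errors [eps j -> 0] and gaps in [1, p]: a gap value
   recurs, and along it the approximations form one forward asymptotic class, inside
   which they form one backward asymptotic class; a member of both classes is a
   limit shadow. *)
Lemma limit_shadowed_of_approx (xs : Z -> X) (p : nat) :
  (forall eps, 0 < eps -> exists y (K : nat), (1 <= K <= p)%nat /\
     eventually (-1) (fun k => d (zi k y) (xs k) < eps) /\
     eventually 1 (fun k => d (zi k y) (xs (k - Z.of_nat K)%Z) < eps)) ->
  exists K : nat, (K <= p)%nat /\ two_sided_limit_shadowed_gap X f g xs (Z.of_nat K).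
Proof.
  intro Happrox.
  destruct (vanishing_sequence (c / 4)) as [eps [Heps Hlim]]; [lra|].
  destruct (choice (fun j (yK : X * nat) => (1 <= snd yK <= p)%nat /\
     eventually (-1) (fun k => d (zi k (fst yK)) (xs k) < eps j) /\
     eventually 1 (fun k => d (zi k (fst yK)) (xs (k - Z.of_nat (snd yK))%Z) < eps j)))
    as [YK HYK].
  { intro j. destruct (Happrox (eps j) (proj1 (Heps j))) as [y [K HyK]]. exists (y, K). exact HyK. }
  set (Y := fun j => fst (YK j)). set (Kf := fun j => snd (YK j)).
  assert (Hclose : forall s ys i j,
    eventually s (fun k => d (zi k (Y i)) (ys k) < eps i) ->
    eventually s (fun k => d (zi k (Y j)) (ys k) < eps j) ->
    eventually s (fun k => d (zi k (Y i)) (zi k (Y j)) <= c / 2)).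
  { intros s ys i j Hi Hj. eapply eventually_mono; [|exact (close_of_common_approx s _ _ ys _ _ Hi Hj)].
    intros k Hk. simpl in Hk. pose proof (Heps i). pose proof (Heps j). lra. }
  destruct (bounded_recurrent_value Kf p) as [K0 HK0]; [intro j; apply HYK|].
  destruct (asymptotic_class_recurrent 1 (or_introl eq_refl) Y (fun j => Kf j = K0))
    as [i0 [HKi0 Hi0]]; [exact HK0 | |].
  { intros i j Hi Hj. apply (Hclose 1%Z (fun k => xs (k - Z.of_nat K0)%Z));
      [rewrite <- Hi | rewrite <- Hj]; apply HYK. }
  destruct (asymptotic_class_recurrent (-1) (or_intror eq_refl) Y
    (fun j => Kf j = K0 /\ asymptotic 1 (Y i0) (Y j))) as [i1 [[HKi1 Hi0i1] Hi1]].
  { intro B. destruct (Hi0 B) as [j [Hj [HKj Ha]]]. exists j. auto. }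
  { intros i j _ _. apply (Hclose (-1)%Z xs); apply HYK. }
  exists K0. split; [rewrite <- HKi1; apply HYK|].
  exists (Y i1). split.
  - apply tends0_neg_of_eventually; [intro; apply dist_nonneg|].
    apply (vanishing_approx_of_asymptotic (-1) (Y i1) xs Y eps Hlim).
    intro B. destruct (Hi1 B) as [j [Hj [_ Ha]]]. exists j. repeat split; [exact Hj | exact Ha|].
    apply HYK.
  - apply tends0_pos_of_shifted_approx.
    apply (vanishing_approx_of_asymptotic 1 (Y i1) _ Y eps Hlim).
    intro B. destruct (Hi0 B) as [j [Hj [HKj Ha]]]. exists j. repeat split; [exact Hj| |].
    + apply (asymptotic_trans 1 _ (Y i0)); [apply asymptotic_sym|]; assumption.
    + rewrite <- HKj. apply HYK.
Qed.

(** * Chains and approximate shadows with bounded gap *)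

Definition chain (del : R) (a b : X) (L : nat) : Prop :=
  exists C : nat -> X, C 0%nat = a /\ C L = b /\
    forall i, (i < L)%nat -> d (f (C i)) (C (S i)) < del.

Lemma chain_step (del : R) (a b : X) : d (f a) b < del -> chain del a b 1.
Proof.
  intro Hab. exists (fun i => match i with O => a | S _ => b end).
  repeat split. intros i Hi. replace i with 0%nat by lia. exact Hab.
Qed.

Lemma chain_orbit (del : R) (x : X) (k : nat) : 0 < del -> chain del x (Nat.iter k f x) k.
Proof.
  intro Hdel. exists (fun i => Nat.iter i f x). repeat split.
  intros i _. simpl. rewrite dist_diag. exact Hdel.
Qed.

Lemma chain_app (del : R) (a b e : X) (L1 L2 : nat) :
  chain del a b L1 -> chain del b e L2 -> chain del a e (L1 + L2).
Proof.
  intros [C1 [H10 [H1L H1s]]] [C2 [H20 [H2L H2s]]].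
  exists (fun i => if Nat.leb i L1 then C1 i else C2 (i - L1)%nat). split; [|split].
  - exact H10.
  - destruct (Nat.leb_spec (L1 + L2) L1).
    + replace L2 with 0%nat in * by lia. rewrite Nat.add_0_r, H1L, <- H2L, H20. reflexivity.
    + replace (L1 + L2 - L1)%nat with L2 by lia. exact H2L.
  - intros i Hi. destruct (Nat.leb_spec i L1), (Nat.leb_spec (S i) L1).
    + apply H1s. lia.
    + replace i with L1 by lia. replace (S L1 - L1)%nat with 1%nat by lia.
      rewrite H1L, <- H20. apply H2s. lia.
    + lia.
    + replace (S i - L1)%nat with (S (i - L1)) by lia. apply H2s. lia.
Qed.

Lemma chain_periodic (del : R) (z : X) (p m : nat) :
  0 < del -> Nat.iter p f z = z -> chain del z z (m * p).
Proof.
  intros Hdel Hz. induction m as [|m IH].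
  - exists (fun _ => z). repeat split. intros; lia.
  - apply chain_app with z; [|exact IH]. rewrite <- Hz at 2. apply chain_orbit, Hdel.
Qed.

Lemma chain_split_first (del : R) (a b : X) (L : nat) :
  chain del a b (S L) -> exists x, d (f a) x < del /\ chain del x b L.
Proof.
  intros [C [HC0 [HCL HCs]]]. exists (C 1%nat). split.
  - rewrite <- HC0. apply HCs. lia.
  - exists (fun i => C (S i)). repeat split; [exact HCL|]. intros i Hi. apply HCs. lia.
Qed.

Lemma chain_split_last (del : R) (a b : X) (L : nat) :
  chain del a b (S L) -> exists x, chain del a x L /\ d (f x) b < del.
Proof.
  intros [C [HC0 [HCL HCs]]]. exists (C L). split.
  - exists C. repeat split; [exact HC0|]. intros i Hi. apply HCs. lia.
  - rewrite <- HCL. apply HCs. lia.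
Qed.

Lemma chain_start_open (del : R) (z : X) (L : nat) :
  is_open X (fun a => (1 <= L)%nat /\ chain del a z L).
Proof.
  intros a [HL Hch]. destruct L as [|L]; [lia|].
  destruct (chain_split_first del a z L Hch) as [x [Hx Hxz]].
  destruct (fcont a (del - d (f a) x)) as [r [Hr Hcont]]; [lra|].
  exists r. split; [exact Hr|]. intros a' Ha'. split; [exact HL|].
  apply (chain_app del a' x z 1 L); [|exact Hxz]. apply chain_step.
  specialize (Hcont a' Ha'). pose proof (dist_tri X (f a') (f a) x).
  rewrite (dist_sym X (f a') (f a)) in *. lra.
Qed.

Lemma chain_end_open (del : R) (z : X) (L : nat) :
  is_open X (fun b => (1 <= L)%nat /\ chain del z b L).
Proof.
  intros b [HL Hch]. destruct L as [|L]; [lia|].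
  destruct (chain_split_last del z b L Hch) as [x [Hzx Hx]].
  exists (del - d (f x) b). split; [lra|]. intros b' Hb'. split; [exact HL|].
  rewrite <- Nat.add_1_r. apply (chain_app del z x b' L 1); [exact Hzx|]. apply chain_step.
  unfold ball in Hb'. pose proof (dist_tri X (f x) b b'). lra.
Qed.

Lemma closed_chain_pseudo_orbit (del : R) (x : X) (L : nat) :
  (1 <= L)%nat -> chain del x x L ->
  exists xs, pseudo_orbit del xs /\ forall k j, xs (k + Z.of_nat j * Z.of_nat L)%Z = xs k.
Proof.
  intros HL [C [HC0 [HCL HCs]]].
  set (LZ := Z.of_nat L). assert (HLZ : (0 < LZ)%Z) by (unfold LZ; lia).
  exists (fun k => C (Z.to_nat (k mod LZ))). split.
  - intro k. rewrite Z_mod_succ by exact HLZ. pose proof (Z.mod_pos_bound k LZ HLZ).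
    destruct (Z.ltb_spec (k mod LZ + 1) LZ).
    + replace (Z.to_nat (k mod LZ + 1)) with (S (Z.to_nat (k mod LZ))) by lia.
      apply HCs. unfold LZ in *. lia.
    + rewrite HC0, <- HCL at 1. replace L with (S (Z.to_nat (k mod LZ))) by (unfold LZ in *; lia).
      apply HCs. unfold LZ in *. lia.
  - intros k j. rewrite Z_mod_plus_full. reflexivity.
Qed.

Lemma splice_chain (del : R) (xs : Z -> X) (M K : nat) :
  (forall k, (k < - Z.of_nat M)%Z -> d (f (xs k)) (xs (k + 1)%Z) < del) ->
  (forall k, (Z.of_nat M <= k)%Z -> d (f (xs k)) (xs (k + 1)%Z) < del) ->
  chain del (xs (- Z.of_nat M)%Z) (xs (Z.of_nat M)) (2 * M + K) ->
  exists ys, pseudo_orbit del ys /\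
    (forall k, (k <= - Z.of_nat M)%Z -> ys k = xs k) /\
    (forall k, (Z.of_nat M + Z.of_nat K <= k)%Z -> ys k = xs (k - Z.of_nat K)%Z).
Proof.
  intros Hbwd Hfwd [C [HC0 [HCL HCs]]].
  set (MZ := Z.of_nat M) in *. set (KZ := Z.of_nat K) in *.
  assert (HCend : C (Z.to_nat (MZ + KZ + MZ)) = xs MZ).
  { rewrite <- HCL. f_equal. unfold MZ, KZ. lia. }
  exists (fun k => if (k <=? - MZ)%Z then xs k
                   else if (k <=? MZ + KZ)%Z then C (Z.to_nat (k + MZ)) else xs (k - KZ)%Z).
  split; [|split].
  - intro k. destruct (Z.leb_spec k (- MZ)), (Z.leb_spec (k + 1) (- MZ)); try lia.
    + apply Hbwd. lia.
    + replace k with (- MZ)%Z by lia. destruct (Z.leb_spec (- MZ + 1) (MZ + KZ)).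
      2: { replace (- MZ + 1 - KZ)%Z with (- MZ + 1)%Z by lia. apply Hfwd. lia. }
      rewrite <- HC0. replace (Z.to_nat (- MZ + 1 + MZ)) with 1%nat by lia. apply HCs. lia.
    + destruct (Z.leb_spec k (MZ + KZ)), (Z.leb_spec (k + 1) (MZ + KZ)); try lia.
      * replace (Z.to_nat (k + 1 + MZ)) with (S (Z.to_nat (k + MZ))) by lia.
        apply HCs. unfold MZ, KZ in *. lia.
      * replace k with (MZ + KZ)%Z by lia. rewrite HCend.
        replace (MZ + KZ + 1 - KZ)%Z with (MZ + 1)%Z by lia. apply Hfwd. lia.
      * replace (k + 1 - KZ)%Z with (k - KZ + 1)%Z by lia. apply Hfwd. lia.
  - intros k Hk. destruct (Z.leb_spec k (- MZ)); [reflexivity | lia].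
  - intros k Hk. destruct (Z.leb_spec k (- MZ)); [f_equal; lia|].
    destruct (Z.leb_spec k (MZ + KZ)); [|reflexivity].
    replace k with (MZ + KZ)%Z by lia. rewrite HCend. f_equal. lia.
Qed.

(* Winding around the [p]-periodic orbit adjusts the length of a chain by multiples of [p]. *)
Lemma chain_via_periodic (del : R) (a b z : X) (p l1 l2 L : nat) :
  0 < del -> (1 <= p)%nat -> Nat.iter p f z = z ->
  chain del a z l1 -> chain del z b l2 -> (l1 + l2 <= L)%nat ->
  exists K, (1 <= K <= p)%nat /\ chain del a b (L + K).
Proof.
  intros Hdel Hp Hz Haz Hzb HL.
  set (q := ((L - l1 - l2) / p + 1)%nat).
  pose proof (Nat.div_mod_eq (L - l1 - l2) p). pose proof (Nat.mod_upper_bound (L - l1 - l2) p).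
  exists (q * p - (L - l1 - l2))%nat. split; [unfold q; nia|].
  replace (L + (q * p - (L - l1 - l2)))%nat with (l1 + q * p + l2)%nat by (unfold q; nia).
  apply chain_app with z; [apply chain_app with z|]; auto using chain_periodic.
Qed.

Hypothesis Htr : transitive X f.

Lemma chain_of_transitive (del : R) :
  0 < del -> forall a b, exists L, (1 <= L)%nat /\ chain del a b L.
Proof.
  intros Hdel a b. destruct (fcont (g b) del Hdel) as [e [He Hcont]]. rewrite fg in Hcont.
  destruct (Htr (ball X (f a) del) (ball X (g b) e) (ball_open X _ _) (ball_open X _ _))
    as [k [u [Hu Hv]]].
  - exists (f a). unfold ball. rewrite dist_diag. exact Hdel.
  - exists (g b). unfold ball. rewrite dist_diag. exact He.
  - exists (1 + k + 1)%nat. split; [lia|].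
    apply chain_app with (Nat.iter k f u); [apply chain_app with u|].
    + apply chain_step. exact Hu.
    + apply chain_orbit. exact Hdel.
    + apply chain_step. rewrite dist_sym. apply Hcont. exact Hv.
Qed.

Lemma chain_to_bounded (z : X) (del : R) :
  0 < del -> exists T, forall a, exists L, (L <= T)%nat /\ chain del a z L.
Proof.
  intro Hdel.
  destruct (compact_nat_cover_bounded X Hcpt (fun L a => (1 <= L)%nat /\ chain del a z L))
    as [T HT]; [intro L; apply chain_start_open | intro a; apply chain_of_transitive; exact Hdel |].
  exists T. intro a. destruct (HT a) as [L [HLT [_ Hch]]]. eauto.
Qed.

Lemma chain_from_bounded (z : X) (del : R) :
  0 < del -> exists T, forall b, exists L, (L <= T)%nat /\ chain del z b L.
Proof.
  intro Hdel.
  destruct (compact_nat_cover_bounded X Hcpt (fun L b => (1 <= L)%nat /\ chain del z b L))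
    as [T HT]; [intro L; apply chain_end_open | intro b; apply chain_of_transitive; exact Hdel |].
  exists T. intro b. destruct (HT b) as [L [HLT [_ Hch]]]. eauto.
Qed.

(* The shadow of a periodic pseudo-orbit returns [c / 2]-close to itself every
   period, so by expansivity some return is exact. *)
Lemma periodic_point_exists (x0 : X) : exists z p, (1 <= p)%nat /\ Nat.iter p f z = z.
Proof.
  destruct (Hsh (c / 4)) as [del [Hdel Hshadow]]; [lra|].
  destruct (chain_of_transitive del Hdel x0 x0) as [L [HL Hchain]].
  destruct (closed_chain_pseudo_orbit del x0 L HL Hchain) as [xs [Hxs Hper]].
  destruct (Hshadow xs Hxs) as [z Hz].
  destruct (dynamical_ball_collision z (fun j => zi (Z.of_nat j * Z.of_nat L) z))
    as [m [l [_ [_ [Hml Hzml]]]]].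
  - intros j _ k. rewrite <- ziter_add.
    pose proof (Hz (k + Z.of_nat j * Z.of_nat L)%Z) as Hzj. rewrite Hper in Hzj.
    pose proof (Hz k). pose proof (dist_tri X (zi (k + Z.of_nat j * Z.of_nat L) z) (xs k) (zi k z)).
    rewrite (dist_sym X (xs k) (zi k z)) in *. lra.
  - assert (Hcycle : forall a b : nat, (a < b)%nat ->
      zi (Z.of_nat a * Z.of_nat L) z = zi (Z.of_nat b * Z.of_nat L) z ->
      exists p, (1 <= p)%nat /\ Nat.iter p f z = z).
    { intros a b Hab E. exists (Z.to_nat (Z.of_nat b * Z.of_nat L - Z.of_nat a * Z.of_nat L)).
      split; [nia | apply ziter_period; [nia | exact E]]. }
    exists z. destruct (proj1 (Nat.lt_gt_cases m l) Hml).
    + apply (Hcycle m l); auto.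
    + apply (Hcycle l m); auto.
Qed.

(* Follow [xs] up to time [-M], chain to the periodic orbit, wind around it, chain
   to [xs M], and shadow; the number of windings puts the gap in [1, p]. *)
Lemma approx_shadow_bounded_gap (z : X) (p : nat) :
  (1 <= p)%nat -> Nat.iter p f z = z ->
  forall xs, two_sided_limit_pseudo_orbit X f xs -> forall eps, 0 < eps ->
  exists y (K : nat), (1 <= K <= p)%nat /\
    eventually (-1) (fun k => d (zi k y) (xs k) < eps) /\
    eventually 1 (fun k => d (zi k y) (xs (k - Z.of_nat K)%Z) < eps).
Proof.
  intros Hp Hz xs [Hpos Hneg] eps Heps.
  destruct (Hsh eps Heps) as [del [Hdel Hshadow]].
  destruct (chain_to_bounded z del Hdel) as [T1 HT1].
  destruct (chain_from_bounded z del Hdel) as [T2 HT2].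
  destruct (Hpos del Hdel) as [Kp HKp]. destruct (Hneg del Hdel) as [Kn HKn].
  set (M := (T1 + T2 + Z.to_nat (Z.abs Kp) + Z.to_nat (Z.abs Kn))%nat).
  destruct (HT1 (xs (- Z.of_nat M)%Z)) as [l1 [Hl1 C1]].
  destruct (HT2 (xs (Z.of_nat M))) as [l2 [Hl2 C2]].
  destruct (chain_via_periodic del _ _ z p l1 l2 (2 * M) Hdel Hp Hz C1 C2) as [K [HK Hchain]];
    [unfold M; lia|].
  destruct (splice_chain del xs M K) as [ys [Hys [Hbwd Hfwd]]]; [| |exact Hchain|].
  - intros k Hk. apply (Rle_lt_trans _ _ _ (Rle_abs _)), HKn. unfold M in Hk. lia.
  - intros k Hk. apply (Rle_lt_trans _ _ _ (Rle_abs _)), HKp. unfold M in Hk. lia.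
  - destruct (Hshadow ys Hys) as [y Hy]. exists y, K. split; [exact HK|]. split.
    + exists (Z.of_nat M). intros k Hk. rewrite <- Hbwd by lia. apply Hy.
    + exists (Z.of_nat M + Z.of_nat K)%Z. intros k Hk. rewrite <- Hfwd by lia. apply Hy.
Qed.

End Dynamics.

Theorem theorem2p2 (X : metric_space) (f g : X -> X) (n : nat) :
  compact_space X ->
  homeomorphism X f ->
  (forall x, g (f x) = x) -> (forall x, f (g x) = x) ->
  transitive X f ->
  n_expansive X n f g ->
  shadowing X f g ->
  two_sided_limit_shadowing_gap X f g.
Proof.
  intros Hcpt [Hfcont [g' [Hg'cont [Hg'f _]]]] gf fg Htr [c [Hc Hexp]] Hsh.
  assert (Hgcont : continuous_map X g).
  { assert (Hgg' : forall x, g x = g' x) by (intro x; rewrite <- (Hg'f (g x)), fg; reflexivity).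
    intros x e He. destruct (Hg'cont x e He) as [del [Hdel Hcont]].
    exists del. split; [exact Hdel|]. intros y Hy. rewrite !Hgg'. auto. }
  destruct (classic (inhabited X)) as [[x0] | Hempty].
  2: { exists 0%nat. intros xs _. exfalso. exact (Hempty (inhabits (xs 0%Z))). }
  destruct (periodic_point_exists X f g gf fg Hfcont n c Hc Hexp Hsh Htr x0) as [z [p [Hp Hz]]].
  exists p. intros xs Hxs.
  destruct (limit_shadowed_of_approx X f g gf fg Hfcont Hgcont n c Hc Hexp Hsh Hcpt xs p)
    as [K [HKp HK]].
  - exact (approx_shadow_bounded_gap X f g fg Hfcont Hsh Hcpt Htr z p Hp Hz xs Hxs).
  - exists (Z.of_nat K). split; [lia | exact HK].
Qed.
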